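(* For every fixed positive integer $p$, $$\lim_{d\to\infty}\frac{|B(d,p)\cap\mathbb{P}^d_\circ|}{d^p}=\frac{2^{p-1}}{p!}\quad\text{and}\quad\lim_{d\to\infty}\frac{\kappa(B(d,p)\cap\mathbb{P}^d_\circ)}{d^{p-1}}=\frac{2^{p-1}}{(p-1)!}.$$
   Context: A point of $\mathbb{Z}^d$ is primitive if its coordinates are relatively prime; $\mathbb{P}^d_\circ$ denotes the set of primitive points of $\mathbb{Z}^d$ whose first non-zero coordinate is positive. $B(d,p)=\{x\in\mathbb{R}^d:\|x\|_1\le p\}$. For a finite $\mathcal{X}\subset\mathbb{R}^d$, $\kappa(\mathcal{X})=\max_{1\le i\le d}\sum_{x\in\mathcal{X}}|x_i|$. *)

From HB Require Import structures.
From mathcomp Require Import all_boot all_order all_algebra.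
From mathcomp Require Import all_classical all_reals all_analysis.
Set Implicit Arguments. Unset Strict Implicit. Unset Printing Implicit Defensive.
Import Order.TTheory GRing.Theory Num.Theory.

Definition zpoint (d : nat) := 'I_d -> int.

Definition l1norm (d : nat) (x : zpoint d) : nat := (\sum_(i < d) `|x i|)%N.

Definition primitive (d : nat) (x : zpoint d) : bool :=
  (\big[gcdn/0%N]_(i < d) `|x i|) == 1%N.

Definition first_nonzero_pos (d : nat) (x : zpoint d) : bool :=
  [exists i : 'I_d, ((0 < x i)%R && [forall j : 'I_d, (j < i)%N ==> (x j == 0)])].

(* Encoding of points with all coordinates in [-p, p]: coordinate k in 'I_(2p+1)
   stands for the integer k - p.  Every point of B(d,p) has all coordinates in
   [-p,p], and the decoding is injective, so finite sets of such codes represent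
   exactly the subsets of B(d,p) /\ Z^d. *)
Definition decode (d p : nat) (f : {ffun 'I_d -> 'I_(2 * p + 1)}) : zpoint d :=
  fun i => ((f i : nat)%:Z - p%:Z)%R.

Definition BP (d p : nat) : {set {ffun 'I_d -> 'I_(2 * p + 1)}} :=
  [set f | [&& (l1norm (decode f) <= p)%N, primitive (decode f)
             & first_nonzero_pos (decode f)]].

Definition card_BP (d p : nat) : nat := #|BP d p|.

Definition kappa_BP (d p : nat) : nat :=
  (\max_(i < d) \sum_(f in BP d p) `|decode f i|)%N.

From Pilot Require Import Defs.
From HB Require Import structures.
From mathcomp Require Import all_boot all_order all_algebra perm.
From mathcomp Require Import all_classical all_reals all_analysis.
From mathcomp Require Import zify ring.
Import Order.TTheory GRing.Theory Num.Theory.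
Import numFieldNormedType.Exports.
Set Implicit Arguments. Unset Strict Implicit. Unset Printing Implicit Defensive.

(* Negation is an involution on the primitive points of B(d,p) that exchanges the
   points whose first nonzero coordinate is positive with the others, so the number
   of points and every coordinate sum sum_x |x_i| over B(d,p) ∩ P^d_∘ are half of
   those over all primitive points of B(d,p); permuting coordinates shows that the
   coordinate sums do not depend on i, hence d κ is half the total l1-mass.
   A primitive point of B(d,p) either has p coordinates equal to ±1 and the others 0
   (there are C(d,p) 2^p of these, each of l1-norm p) or fewer than p nonzero
   coordinates (there are O(d^(p-1)) of these).  As C(d,p) p! = d^p + O(d^(p-1)),
   dividing by d^p gives both limits. *)

Lemma ffact_leq_expn n m : (n ^_ m <= n ^ m)%N.
Proof. by elim: m => [|m IH] //; rewrite ffactnSr expnSr leq_mul // leq_subr. Qed.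

Lemma bin_leq_expn n m : ('C(n, m) <= n ^ m)%N.
Proof.
by apply: leq_trans (ffact_leq_expn n m); rewrite -bin_ffact leq_pmulr // fact_gt0.
Qed.

Lemma expn_leq_ffact n m : (n ^ m <= n ^_ m + m * m * n ^ m.-1)%N.
Proof.
elim: m => [|m IH] //; rewrite ffactnSr expnSr /=.
have := ffact_leq_expn n m; case: m IH => [|m]; rewrite ?ffactn0 /=; first lia.
rewrite expnSr; set F := (n ^_ m.+1)%N; set P := (n ^ m)%N; nia.
Qed.

Lemma bin_fact_sandwich n m :
  ('C(n, m) * m`! <= n ^ m <= 'C(n, m) * m`! + m * m * n ^ m.-1)%N.
Proof. by rewrite bin_ffact ffact_leq_expn expn_leq_ffact. Qed.

Lemma sum_bin_leq n k : (0 < n)%N -> (\sum_(j < k) 'C(n, j) <= k * n ^ k.-1)%N.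
Proof.
move=> n0; apply: (@leq_trans (\sum_(j < k) n ^ k.-1)); last first.
  by rewrite big_const_ord iter_addn_0 mulnC.
apply: leq_sum => j _; apply: leq_trans (bin_leq_expn n j) _.
by rewrite leq_pexp2l //; have := ltn_ord j; lia.
Qed.

Lemma card_small_subsets (T : finType) k :
  #|[set A : {set T} | (#|A| < k)%N]| = (\sum_(j < k) 'C(#|T|, j))%N.
Proof.
elim: k => [|k IH].
  by rewrite big_ord0; apply/eqP; rewrite cards_eq0; apply/eqP/setP => A; rewrite !inE.
have -> : [set A : {set T} | (#|A| < k.+1)%N] =
          [set A : {set T} | (#|A| < k)%N] :|: [set A : {set T} | #|A| == k].
  by apply/setP => A; rewrite !inE ltnS leq_eqVlt orbC.
rewrite big_ord_recr /= -IH -card_draws; apply/eqP; rewrite (leq_card_setU _ _).2.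
rewrite disjoint_subset; apply/fintype.subsetP => A; rewrite !inE.
by case: eqP => // ->; rewrite ltnn.
Qed.

Section IntegerPoints.
Variable d : nat.
Implicit Types x : zpoint d.

Lemma l1norm_opp x : l1norm (fun i => - x i)%R = l1norm x.
Proof. by apply: eq_bigr => i _; rewrite abszN. Qed.

Lemma primitive_opp x : primitive (fun i => - x i)%R = primitive x.
Proof. by rewrite /primitive; under eq_bigr do rewrite abszN. Qed.

Lemma l1norm_perm (s : {perm 'I_d}) x : l1norm (x \o s) = l1norm x.
Proof. by rewrite /l1norm [RHS](reindex_inj (@perm_inj _ s)). Qed.

Lemma primitive_perm (s : {perm 'I_d}) x : primitive (x \o s) = primitive x.
Proof. by rewrite /primitive [in RHS](reindex_inj (@perm_inj _ s)). Qed.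

Lemma primitive_neq0 x : primitive x -> exists i, x i != 0%R.
Proof.
case: (pickP (fun i => x i != 0%R)) => [i xi _ | x0]; first by exists i.
by rewrite /primitive big1 // => i _; move/negbFE/eqP: (x0 i) => ->.
Qed.

Lemma first_nonzero_posE x i : x i != 0%R ->
  (forall j : 'I_d, (j < i)%N -> x j = 0%R) -> first_nonzero_pos x = (0 < x i)%R.
Proof.
move=> xi0 below_i; apply/existsP/idP => [[j /andP[xj0 /forallP below_j]] | xi_gt0].
  case: (ltngtP i j) => [ij | ji | /val_inj ij]; last by rewrite ij.
  - by move: xi0; rewrite (eqP (implyP (below_j i) ij)) eqxx.
  - by rewrite below_i // ltxx in xj0.
exists i; rewrite xi_gt0; apply/forallP => j; apply/implyP => /below_i ->; exact: eqxx.
Qed.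

Lemma first_nonzero_posN x : (exists i, x i != 0%R) ->
  first_nonzero_pos (fun i => - x i)%R = ~~ first_nonzero_pos x.
Proof.
move=> [i0 xi0_neq0].
case: (@arg_minnP _ i0 (fun i => x i != 0%R) val xi0_neq0) => i xi0 min_i.
have below_i (j : 'I_d) : (j < i)%N -> x j = 0%R.
  by move=> ji; apply/eqP/negPn/negP => /min_i; rewrite leqNgt ji.
rewrite (first_nonzero_posE xi0 below_i) (@first_nonzero_posE _ i); last 2 first.
- by rewrite oppr_eq0.
- by move=> j /below_i ->; rewrite oppr0.
by rewrite oppr_gt0 ltNge le_eqVlt eq_sym (negbTE xi0).
Qed.

End IntegerPoints.

Section Codes.
Variables d p : nat.
Local Notation code := {ffun 'I_d -> 'I_(2 * p + 1)}.
Implicit Types f : code.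

(* [Defs.decode] is qualified because [choice] also exports a [decode]. *)

(* [rev_ord] sends the code [p + k] of the coordinate [k] to [p - k]. *)
Definition opp_code f : code := [ffun i => rev_ord (f i)].

Definition perm_code (s : {perm 'I_d}) f : code := [ffun i => f (s i)].

Lemma decode_opp_code f : Defs.decode (opp_code f) = (fun i => - Defs.decode f i)%R.
Proof. by apply/funext => i; rewrite /Defs.decode ffunE /=; have := ltn_ord (f i); lia. Qed.

Lemma opp_codeK : involutive opp_code.
Proof. by move=> f; apply/ffunP => i; rewrite !ffunE rev_ordK. Qed.

Lemma decode_perm_code s f : Defs.decode (perm_code s f) = Defs.decode f \o s.
Proof. by apply/funext => i; rewrite /Defs.decode ffunE. Qed.

Lemma perm_code_tpermK i j : involutive (perm_code (tperm i j)).
Proof. by move=> f; apply/ffunP => k; rewrite !ffunE tpermK. Qed.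

Definition Bprim : {set code} :=
  [set f | (l1norm (Defs.decode f) <= p) && primitive (Defs.decode f)].

Lemma mem_BP f : (f \in BP d p) = (f \in Bprim) && first_nonzero_pos (Defs.decode f).
Proof. by rewrite !inE andbA. Qed.

Lemma opp_code_Bprim f : (opp_code f \in Bprim) = (f \in Bprim).
Proof. by rewrite !inE decode_opp_code l1norm_opp primitive_opp. Qed.

Lemma perm_code_Bprim s f : (perm_code s f \in Bprim) = (f \in Bprim).
Proof. by rewrite !inE decode_perm_code l1norm_perm primitive_perm. Qed.

Lemma Bprim_neq0 f : f \in Bprim -> exists i, Defs.decode f i != 0%R.
Proof. by rewrite inE => /andP[_ /primitive_neq0]. Qed.

Lemma sum_first_nonzero_pos_half (S : {set code}) (F : code -> nat) :
    (forall f, (opp_code f \in S) = (f \in S)) ->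
    (forall f, f \in S -> exists i, Defs.decode f i != 0%R) ->
    (forall f, F (opp_code f) = F f) ->
  (2 * \sum_(f in S | first_nonzero_pos (Defs.decode f)) F f = \sum_(f in S) F f)%N.
Proof.
move=> oppS S_neq0 oppF.
rewrite [RHS](bigID (fun f => first_nonzero_pos (Defs.decode f))) /= mul2n -addnn.
congr (_ + _)%N; rewrite (reindex_inj (can_inj opp_codeK)) /=.
apply: eq_big => [f | f _]; last exact: oppF.
rewrite oppS decode_opp_code; case: (boolP (f \in S)) => //= /S_neq0.
exact: first_nonzero_posN.
Qed.

Lemma card_BP_half : (2 * card_BP d p = #|Bprim|)%N.
Proof.
rewrite /card_BP -!sum1_card; under eq_bigl do rewrite mem_BP.
exact: sum_first_nonzero_pos_half opp_code_Bprim Bprim_neq0 _.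
Qed.

Lemma sum_abs_coord_Bprim i j :
  (\sum_(f in Bprim) `|Defs.decode f i| = \sum_(f in Bprim) `|Defs.decode f j|)%N.
Proof.
rewrite (reindex_inj (can_inj (perm_code_tpermK i j))) /=.
apply: eq_big => [f | f _]; first exact: perm_code_Bprim.
by rewrite decode_perm_code /= tpermL.
Qed.

Lemma kappa_BP_half : (0 < d)%N ->
  (2 * d * kappa_BP d p = \sum_(f in Bprim) l1norm (Defs.decode f))%N.
Proof.
move=> d0; pose i0 := Ordinal d0.
pose K i := (\sum_(f in BP d p) `|Defs.decode f i|)%N.
have K_half i : (2 * K i = \sum_(f in Bprim) `|Defs.decode f i|)%N.
  rewrite /K; under eq_bigl do rewrite mem_BP.
  apply: sum_first_nonzero_pos_half opp_code_Bprim Bprim_neq0 _ => f.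
  by rewrite decode_opp_code abszN.
have K_const i : K i = K i0.
  by apply/eqP; rewrite -(eqn_pmul2l (isT : 0 < 2)%N) !K_half (sum_abs_coord_Bprim i i0).
have -> : kappa_BP d p = K i0.
  apply/eqP; rewrite eqn_leq (@leq_bigmax _ K i0) andbT.
  by apply/bigmax_leqP => i _; rewrite -/(K i) K_const.
rewrite /l1norm exchange_big /=; under eq_bigr do rewrite -K_half K_const.
by rewrite big_const_ord iter_addn_0 mulnAC.
Qed.

Fact code0_subproof : (p < 2 * p + 1)%N. Proof. lia. Qed.

Definition code0 : 'I_(2 * p + 1) := Ordinal code0_subproof.

Lemma decode_eq0 f i : (Defs.decode f i == 0%R) = (f i == code0).
Proof. by rewrite /Defs.decode; apply/eqP/eqP => [h | ->] /=; [apply: val_inj => /= | ]; lia. Qed.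

Definition supp f : {set 'I_d} := [set i | Defs.decode f i != 0%R].

Lemma mem_supp f i : (i \in supp f) = (0 < `|Defs.decode f i|)%N.
Proof. by rewrite inE absz_gt0. Qed.

Lemma l1norm_supp f : l1norm (Defs.decode f) = (\sum_(i in supp f) `|Defs.decode f i|)%N.
Proof.
rewrite /l1norm (bigID (mem (supp f))) /= [X in (_ + X)%N]big1 ?addn0 // => i.
by rewrite mem_supp -leqNgt leqn0 => /eqP.
Qed.

Definition sign_points : {set code} :=
  [set f | (#|supp f| == p) && [forall i, `|Defs.decode f i| <= 1]%N].

Lemma sign_points_l1norm f : f \in sign_points -> l1norm (Defs.decode f) = p.
Proof.
rewrite inE => /andP[/eqP supp_p /forallP le1].
rewrite -[RHS]supp_p l1norm_supp -sum1_card.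
by apply: eq_bigr => i; rewrite mem_supp; have := le1 i; lia.
Qed.

Lemma sign_points_subset : (0 < p)%N -> sign_points \subset Bprim.
Proof.
move=> p0; apply/fintype.subsetP => f fE; rewrite inE sign_points_l1norm //=.
move: fE; rewrite inE => /andP[/eqP supp_p /forallP le1].
have /card_gt0P[i i_supp] : (0 < #|supp f|)%N by rewrite supp_p.
have unit_i : `|Defs.decode f i|%N = 1%N.
  by move: i_supp; rewrite mem_supp; have := le1 i; lia.
by rewrite leqnn /primitive (bigD1 i) //= unit_i gcd1n.
Qed.

Lemma Bprim_subset : Bprim \subset sign_points :|: [set f | (#|supp f| < p)%N].
Proof.
apply/fintype.subsetP => f; rewrite !inE => /andP[l1_le_p _].
case: ltnP => [_ | p_le_supp]; first by rewrite orbT.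
rewrite orbF.
have excess_supp : l1norm (Defs.decode f) =
    (#|supp f| + \sum_(i in supp f) (`|Defs.decode f i| - 1))%N.
  rewrite l1norm_supp -sum1_card -big_split /=.
  by apply: eq_bigr => i; rewrite mem_supp; lia.
have : (\sum_(i in supp f) (`|Defs.decode f i| - 1) == 0)%N by lia.
rewrite sum_nat_eq0 => /forall_inP le1; apply/andP; split; first lia.
apply/forallP => i; case: (boolP (i \in supp f)) => [/le1 | ]; rewrite ?mem_supp; lia.
Qed.

Definition unit_codes : {set 'I_(2 * p + 1)} :=
  [set c : 'I_(2 * p + 1) | `|(c%:Z - p%:Z)%R| == 1%N].

Lemma card_unit_codes : (0 < p)%N -> #|unit_codes| = 2.
Proof.
move=> p0; have lo : (p.-1 < 2 * p + 1)%N by lia.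
have hi : (p.+1 < 2 * p + 1)%N by lia.
have -> : unit_codes = [set Ordinal lo; Ordinal hi].
  apply/setP => c; rewrite !inE; apply/eqP/orP => [c_unit | [] /eqP ->] /=; try lia.
  by case: (ltnP c p) => c_p; [left | right]; apply/eqP/val_inj => /=; lia.
by rewrite cards2; case: eqP => // /(congr1 val) /=; lia.
Qed.

Lemma unit_codes_decode f i : (f i \in unit_codes) = (`|Defs.decode f i| == 1)%N.
Proof. by rewrite inE. Qed.

Lemma sign_points_supp (A : {set 'I_d}) f : #|A| = p ->
  ((f \in sign_points) && (supp f == A)) = (f \in pffun_on code0 A unit_codes).
Proof.
move=> card_A; have outside i : (f i == code0) = (`|Defs.decode f i| == 0)%N.
  by rewrite -decode_eq0 absz_eq0.
apply/andP/(pfamilyP (F := fun=> unit_codes)) => [[] | [/fintype.subsetP on_A in_A]].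
  rewrite inE => /andP[_ /forallP le1] /eqP <-; split.
    by apply/fintype.subsetP => i; rewrite inE /= outside mem_supp; lia.
  by move=> i; rewrite mem_supp unit_codes_decode; have := le1 i; lia.
have supp_A : supp f = A.
  apply/setP => i; rewrite mem_supp; apply/idP/idP => [i_supp | /in_A].
    by apply: on_A; rewrite inE /= outside; lia.
  by rewrite unit_codes_decode; lia.
rewrite supp_A eqxx inE supp_A card_A eqxx; split => //.
apply/forallP => i; case: (boolP (i \in A)) => [/in_A | ].
  by rewrite unit_codes_decode; lia.
by rewrite -supp_A mem_supp; lia.
Qed.

Lemma card_sign_points : (0 < p)%N -> #|sign_points| = ('C(d, p) * 2 ^ p)%N.
Proof.
move=> p0; rewrite -sum1_card (partition_big supp (fun A => #|A| == p)); last first.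
  by move=> f; rewrite inE => /andP[].
rewrite /= (eq_bigr (fun=> 2 ^ p)%N) => [|A /eqP card_A].
  rewrite sum_nat_const; congr (_ * _)%N.
  by rewrite -[in RHS](card_ord d) -card_draws; apply: eq_card => A; rewrite inE.
under eq_bigl do rewrite sign_points_supp //.
by rewrite sum1_card card_pffun_on card_unit_codes // card_A.
Qed.

Lemma card_small_supp : (0 < d)%N ->
  (#|[set f | (#|supp f| < p)%N]| <= p * d ^ p.-1 * (2 * p + 1) ^ p)%N.
Proof.
move=> d0; rewrite -sum1_card (partition_big supp (fun A => #|A| < p)%N); last first.
  by move=> f; rewrite inE.
apply: (@leq_trans (\sum_(A : {set 'I_d} | (#|A| < p)%N) (2 * p + 1) ^ p)).
  apply: leq_sum => A small_A; rewrite sum1_card.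
  apply: (@leq_trans #|pffun_on code0 A [set: 'I_(2 * p + 1)]|).
    apply/subset_leq_card/fintype.subsetP => f; rewrite inE => /andP[_ /eqP <-].
    apply/(pfamilyP (F := fun=> [set: 'I_(2 * p + 1)])); split => [|i _]; last first.
      by rewrite inE.
    by apply/fintype.subsetP => i; rewrite inE /= inE decode_eq0.
  by rewrite card_pffun_on cardsT card_ord leq_pexp2l //; lia.
rewrite sum_nat_const leq_mul2r; apply/orP; right.
apply: leq_trans (sum_bin_leq p d0); have := card_small_subsets 'I_d p.
by rewrite card_ord => <-; apply/eq_leq/eq_card => A; rewrite !inE.
Qed.

End Codes.

Lemma card_Bprim_sandwich d p : (0 < p)%N -> (0 < d)%N ->
  (#|sign_points d p| <= #|Bprim d p|
                      <= #|sign_points d p| + p * d ^ p.-1 * (2 * p + 1) ^ p)%N.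
Proof.
move=> p0 d0; rewrite subset_leq_card ?sign_points_subset //=.
apply: leq_trans (subset_leq_card (Bprim_subset d p)) _.
by apply: leq_trans (leq_of_leqif (leq_card_setU _ _)) _; rewrite leq_add2l card_small_supp.
Qed.

Lemma sum_l1norm_Bprim_sandwich d p : (0 < p)%N ->
  (p * #|sign_points d p| <= \sum_(f in Bprim d p) l1norm (Defs.decode f)
                          <= p * #|Bprim d p|)%N.
Proof.
move=> p0; rewrite ![p * _]mulnC -!sum_nat_const; apply/andP; split.
  rewrite (eq_bigr (fun f => l1norm (Defs.decode f))) => [|f /sign_points_l1norm //].
  by rewrite [X in (_ <= X)%N](big_setID (sign_points d p)) /=
     (finset.setIidPr (sign_points_subset d p0)) leq_addr.
by apply: leq_sum => f; rewrite inE => /andP[].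
Qed.

Lemma card_BP_sandwich d p : (0 < p)%N -> (0 < d)%N ->
  (2 ^ p.-1 * 'C(d, p) <= card_BP d p
                      <= 2 ^ p.-1 * 'C(d, p) + p * (2 * p + 1) ^ p * d ^ p.-1)%N.
Proof.
move=> p0 d0; have := card_Bprim_sandwich p0 d0.
rewrite -card_BP_half card_sign_points // -(prednK p0) expnS /=.
set N := card_BP d p; set C := 'C(d, p); set T := (2 ^ p.-1)%N; nia.
Qed.

Lemma kappa_BP_sandwich d p : (0 < p)%N -> (0 < d)%N ->
  (p * 2 ^ p.-1 * 'C(d, p) <= d * kappa_BP d p
       <= p * 2 ^ p.-1 * 'C(d, p) + p * (p * (2 * p + 1) ^ p) * d ^ p.-1)%N.
Proof.
move=> p0 d0; have := card_Bprim_sandwich p0 d0; have := sum_l1norm_Bprim_sandwich d p0.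
rewrite -(kappa_BP_half p d0) card_sign_points // -(prednK p0) expnS /=.
set K := kappa_BP d p; set C := 'C(d, p); set T := (2 ^ p.-1)%N; nia.
Qed.

Local Open Scope classical_set_scope.
Local Open Scope ring_scope.

Section Asymptotics.
Variable R : realType.

Lemma cvg_perturb_invn (u v : nat -> R) (a c : R) :
    (forall d, (0 < d)%N -> `|u d - v d| <= c / d%:R) ->
  v @ \oo --> a -> u @ \oo --> a.
Proof.
move=> uv va; have inv0 : (fun d : nat => c / d%:R) @ \oo --> 0.
  rewrite -(mulr0 c); apply: cvgMl_tmp; apply/gtr0_cvgV0; last exact: cvgr_idn.
  by near=> d; rewrite ltr0n; near: d; exact: nbhs_infty_gt.
apply: (squeeze_cvgr (f := fun d => v d - c / d%:R) (h := fun d => v d + c / d%:R)).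
- by near=> d; rewrite -ler_distl uv //; near: d; exact: nbhs_infty_gt.
- by rewrite -[a]subr0; apply: cvgB.
- by rewrite -[a]addr0; apply: cvgD.
Unshelve. all: end_near.
Qed.

Lemma cvg_perturb_pow_ratio (x y : nat -> R) (a c : R) (p : nat) : (0 < p)%N ->
    (forall d, (0 < d)%N -> `|x d - y d| <= c * d%:R ^+ p.-1) ->
  (fun d => y d / d%:R ^+ p) @ \oo --> a -> (fun d => x d / d%:R ^+ p) @ \oo --> a.
Proof.
move=> p0 xy; apply: (cvg_perturb_invn (c := c)) => d d0.
have dp_gt0 : 0 < d%:R ^+ p :> R by rewrite exprn_gt0 // ltr0n.
rewrite -mulrBl normrM normfV (gtr0_norm dp_gt0) ler_pdivrMr //.
by rewrite -[in X in _ <= X](prednK p0) exprS mulrA divfK ?pnatr_eq0 -?lt0n ?xy.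
Qed.

Lemma natr_dist_le (m n e : nat) : (n <= m <= n + e)%N -> `|m%:R - n%:R| <= e%:R :> R.
Proof. by move=> /andP[nm me]; rewrite -natrB // normr_nat ler_nat leq_subLR. Qed.

Lemma cvg_binomial_pow (p : nat) : (0 < p)%N ->
  (fun d => 'C(d, p)%:R / d%:R ^+ p) @ \oo --> ((p`!)%:R^-1 : R).
Proof.
move=> p0; have : (fun d => ('C(d, p) * p`!)%N%:R / d%:R ^+ p) @ \oo --> (1 : R).
  apply: (cvg_perturb_pow_ratio (y := fun d => (d ^ p)%N%:R) (c := (p * p)%:R)) p0 _ _.
    move=> d _; rewrite distrC -natrX -natrM.
    exact/natr_dist_le/bin_fact_sandwich.
  apply: cvg_near_cst; near=> d; rewrite natrX divff // expf_neq0 // pnatr_eq0 -lt0n.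
  by near: d; exact: nbhs_infty_gt.
move=> /(cvgMr_tmp (b := (p`!)%:R^-1)); rewrite mul1r; apply: cvg_trans.
apply: near_eq_cvg; near=> d; rewrite natrM mulrAC mulfK // pnatr_eq0 -lt0n fact_gt0 //.
Unshelve. all: end_near.
Qed.

End Asymptotics.

Theorem lemma7p3 (R : realType) (p : nat) : (0 < p)%N ->
  ((fun d : nat => (card_BP d p)%:R / (d%:R ^+ p) : R) @ \oo
      --> (2 ^+ p.-1 / (p`!)%:R : R)) /\
  ((fun d : nat => (kappa_BP d p)%:R / (d%:R ^+ p.-1) : R) @ \oo
      --> (2 ^+ p.-1 / ((p.-1)`!)%:R : R)).
Proof.
move=> p0; set M := (p * (2 * p + 1) ^ p)%N.
have binom := @cvg_binomial_pow R p p0.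
split.
  apply: (cvg_perturb_pow_ratio (y := fun d => (2 ^ p.-1 * 'C(d, p))%N%:R) (c := M%:R) p0).
    by move=> d d0; rewrite -natrX -natrM; apply: natr_dist_le; exact: card_BP_sandwich.
  under eq_fun do rewrite natrM natrX -mulrA.
  exact: cvgMl_tmp binom.
pose dK d := ((d * kappa_BP d p)%N%:R / d%:R ^+ p : R).
have dK_eq : {near \oo, dK =1 fun d => (kappa_BP d p)%:R / d%:R ^+ p.-1}.
  near=> d; rewrite /dK natrM -[in d%:R ^+ p](prednK p0) exprS invfM mulrACA divff ?mul1r //.
  by rewrite pnatr_eq0 -lt0n; near: d; exact: nbhs_infty_gt.
apply: cvg_trans (near_eq_cvg dK_eq) _.
apply: (cvg_perturb_pow_ratio (y := fun d => (p * 2 ^ p.-1 * 'C(d, p))%N%:R)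
          (c := (p * M)%:R) p0).
  by move=> d d0; rewrite -natrX -natrM; apply: natr_dist_le; exact: kappa_BP_sandwich.
have -> : 2 ^+ p.-1 / ((p.-1)`!)%:R = p%:R * 2 ^+ p.-1 * (p`!)%:R^-1 :> R.
  rewrite -[in p`!](prednK p0) factS natrM prednK //.
  by field; rewrite !pnatr_eq0 -!lt0n fact_gt0 p0.
under eq_fun do rewrite !natrM natrX -mulrA.
exact: cvgMl_tmp binom.
Unshelve. all: end_near.
Qed.
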